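(* For $i,j\in\{1,\dots,d\}$ and $y\in(-1,1)$ let $$z_{ij}(y)=\Big(\sum_{n_0,n_1\ge0}\exp\Big(-\tfrac12\big(Q_{i,n_0}^2+Q_{j,n_1}^2-2yQ_{i,n_0}Q_{j,n_1}\big)\Big)\Big)^{-1}.$$ Then the matrix $(-z_{ij}'(0))_{i,j=1}^d$ is positive semidefinite, and for each $i$, $$|z_{ii}'(0)|\le\frac{(m_i^{(1)}(1))^2}{(m_i^{(0)}(1))^4}.$$
   Context: For each $i$, $Q_{i,n}=\Phi^{-1}(P[X_{i,t}\le n])$ where $X_{i,t}$ is $\mathbb N_0$-valued and $\Phi$ is the standard normal CDF (summands with $Q=\pm\infty$ are $0$). $m_i^{(k)}(u)=\frac1{\sqrt{2\pi}}\sum_{n\ge0}e^{-Q_{i,n}^2/(2u)}|Q_{i,n}|^k$. It is assumed that the relevant series $m_i^{(k)}(u)$ ($k\le 2$, $u$ in a neighborhood of $1$) are finite and $m_i^{(0)}(1)>0$, so that $z_{ij}$ is differentiable and termwise differentiation is valid. *)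

From HB Require Import structures.
From mathcomp Require Import all_boot all_order all_algebra.
From mathcomp Require Import all_classical all_reals all_analysis.
From mathcomp Require Import normal_distribution.

Set Implicit Arguments.
Unset Strict Implicit.
Unset Printing Implicit Defensive.

Import Order.TTheory GRing.Theory Num.Def Num.Theory.
Import numFieldNormedType.Exports.

Local Open Scope classical_set_scope.
Local Open Scope ring_scope.

Section defs.
Context {R : realType}.

Definition Phi (x : R) : R := fine (normal_prob 0 1 `]-oo, x]).

Definition Phi_inv (p : R) : \bar R :=
  if p <= 0 then -oo%E
  else if 1 <= p then +oo%E
  else (xget 0 [set x : R | Phi x = p])%:E.

Definition Qseq {d : nat} {dT : measure_display} {T : measurableType dT}
  (P : probability T R) (X : 'I_d -> T -> nat) (i : 'I_d) (n : nat) : \bar R :=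
  Phi_inv (fine (P [set w | (X i w <= n)%N])).

Definition mterm (u : R) (k : nat) (q : \bar R) : R :=
  match q with
  | EFin r => expR (- r ^+ 2 / (2 * u)) * `|r| ^+ k
  | _ => 0
  end.

Definition mser (Q : nat -> \bar R) (k : nat) (u : R) : \bar R :=
  ((Num.sqrt (2 * pi))^-1)%:E * (\sum_(n <oo) (mterm u k (Q n))%:E)%E.

Definition zterm (y : R) (a b : \bar R) : R :=
  match a, b with
  | EFin a, EFin b => expR (- (a ^+ 2 + b ^+ 2 - 2 * y * a * b) / 2)
  | _, _ => 0
  end.

Definition zfun (Qi Qj : nat -> \bar R) (y : R) : R :=
  (fine (\sum_(n0 <oo) \sum_(n1 <oo) (zterm y (Qi n0) (Qj n1))%:E)%E)^-1.

End defs.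

Definition psd {R : realType} {d : nat} (M : 'M[R]_d) : Prop :=
  M^T = M /\ forall v : 'rV[R]_d, 0 <= (v *m M *m v^T) 0 0.

From HB Require Import structures.
From mathcomp Require Import all_boot all_order all_algebra.
From mathcomp Require Import all_classical all_reals all_analysis.
From mathcomp Require Import ring lra.

(* Derivatives at 0 of the normalising factors z_ij(y) = S_ij(y)^-1, where
     S_ij(y) = sum_{n,m} g(Q_{i,n}) g(Q_{j,m}) exp(y Q_{i,n} Q_{j,m})
   and g(q) = exp(-q^2/2) (with g(+-oo) = 0).

   Put B_i = sum_n g(Q_{i,n}) and A_i = sum_n g(Q_{i,n}) Q_{i,n}.  Summing
   e^t = 1 + t + rem(t), 0 <= rem(t) <= t^2 e^|t|, over t = y Q_{i,n} Q_{j,m}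
   gives the quadratic expansion
     S_ij(y) = B_i B_j + y A_i A_j + r(y),   0 <= r(y) <= C y^2,
   where e^|t| is absorbed into the Gaussian weights when |y| <= 1 - 1/u and
   C is a product of second moments m^(2)(u), u > 1.  Hence S_ij'(0) = A_i A_j
   and z_ij'(0) = - v_i v_j with v_i = A_i / B_i^2: the matrix (-z_ij'(0)) is
   the rank-one positive semidefinite matrix v v^T, and
   |z_ii'(0)| = v_i^2 <= (m_i^(1)(1) / m_i^(0)(1)^2)^2, because
   |A_i| <= sum_n g(Q_{i,n}) |Q_{i,n}| and (2 pi)^(-1/2) <= 1.

   Series are extended-real series of nonnegative terms, so signed sums go
   through positive and negative parts. *)

Import Order.TTheory GRing.Theory Num.Def Num.Theory.
Import numFieldNormedType.Exports.
Local Open Scope ring_scope.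

Section RealFacts.
Context {R : realType}.
Implicit Types (x y t c u w : R).

Definition pos x : R := (x + `|x|) / 2.
Definition neg x : R := pos (- x).

Lemma pos_ge0 x : 0 <= pos x.
Proof. by rewrite /pos divr_ge0 //; have := ler_norm (- x); rewrite normrN; lra. Qed.

Lemma neg_ge0 x : 0 <= neg x.
Proof. exact: pos_ge0. Qed.

Lemma pos_subr_neg x : pos x - neg x = x.
Proof. by rewrite /neg /pos normrN; field. Qed.

Lemma pos_le_norm x : pos x <= `|x|.
Proof. by rewrite /pos; have := ler_norm x; lra. Qed.

Lemma neg_le_norm x : neg x <= `|x|.
Proof. by rewrite -normrN; exact: pos_le_norm. Qed.

(* The positive part of a triple product as a sum of products of parts; this
   makes the double series of (c u_n w_m)^+ separable. *)
Lemma pos_mul3 c u w : pos (c * u * w) =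
  pos c * pos u * pos w + pos c * neg u * neg w +
  neg c * pos u * neg w + neg c * neg u * pos w.
Proof. by rewrite /neg /pos !normrN !normrM; field. Qed.

Definition exp_rem t : R := expR t - 1 - t.

Lemma exp_rem_ge0 t : 0 <= exp_rem t.
Proof. by rewrite /exp_rem; have := expR_ge1Dx t; lra. Qed.

(* e^t - 1 - t <= t^2 e^|t|: from e^t - 1 <= t e^t and 1 - e^t <= -t. *)
Lemma exp_rem_le t : exp_rem t <= t ^+ 2 * expR `|t|.
Proof.
rewrite /exp_rem.
have e_gt0 := expR_gt0 t.
have eN : expR t * expR (- t) = 1 by rewrite -expRD subrr expR0.
have up : expR t - 1 <= t * expR t.
  have : expR t * (1 - t) <= expR t * expR (- t) by rewrite ler_pM2l // expR_ge1Dx.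
  by rewrite eN; nra.
have low := expR_ge1Dx t.
case: (leP 0 t) => ht; first by rewrite ger0_norm //; nra.
rewrite ltr0_norm //.
have e1 : 1 <= expR (- t) by rewrite -expR0 ler_expR; lra.
nra.
Qed.

(* The cross factor e^|yab| is absorbed by two Gaussian weights, whose
   variances widen from 1 to u1 and u2, provided |y| <= 1 - 1/u_k. *)
Lemma gauss_shift (a b y u1 u2 : R) : 0 < u1 -> 0 < u2 ->
  `|y| <= 1 - u1^-1 -> `|y| <= 1 - u2^-1 ->
  expR (- a ^+ 2 / 2) * expR (- b ^+ 2 / 2) * expR `|y * a * b|
  <= expR (- a ^+ 2 / (2 * u1)) * expR (- b ^+ 2 / (2 * u2)).
Proof.
move=> u1_gt0 u2_gt0 hy1 hy2; rewrite -!expRD ler_expR !invfM.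
rewrite !normrM -(real_normK (num_real a)) -(real_normK (num_real b)).
have amgm : `|a| * `|b| <= `|a| ^+ 2 / 2 + `|b| ^+ 2 / 2.
  by have := sqr_ge0 (`|a| - `|b|); lra.
have ha := sqr_ge0 `|a|; have hb := sqr_ge0 `|b|; have hy := normr_ge0 y.
have := ler_wpM2l hy amgm.
have := ler_wpM2r ha hy1; have := ler_wpM2r hb hy2.
nra.
Qed.

Lemma gauss_rem_le (a b y u1 u2 : R) : 0 < u1 -> 0 < u2 ->
  `|y| <= 1 - u1^-1 -> `|y| <= 1 - u2^-1 ->
  expR (- a ^+ 2 / 2) * expR (- b ^+ 2 / 2) * exp_rem (y * a * b)
  <= y ^+ 2 * (expR (- a ^+ 2 / (2 * u1)) * `|a| ^+ 2)
            * (expR (- b ^+ 2 / (2 * u2)) * `|b| ^+ 2).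
Proof.
move=> u1_gt0 u2_gt0 hy1 hy2.
have shift := gauss_shift a b y u1 u2 u1_gt0 u2_gt0 hy1 hy2.
have ga := expR_gt0 (- a ^+ 2 / 2); have gb := expR_gt0 (- b ^+ 2 / 2).
apply: le_trans (_ : expR (- a ^+ 2 / 2) * expR (- b ^+ 2 / 2) *
  ((y * a * b) ^+ 2 * expR `|y * a * b|) <= _).
  by rewrite ler_pM2l ?mulr_gt0 // exp_rem_le.
have -> : (y * a * b) ^+ 2 = y ^+ 2 * `|a| ^+ 2 * `|b| ^+ 2.
  by rewrite !real_normK ?num_real //; ring.
have c_ge0 : 0 <= y ^+ 2 * `|a| ^+ 2 * `|b| ^+ 2 by rewrite -!exprMn sqr_ge0.
set c := y ^+ 2 * _ * _ in c_ge0 *.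
set E := expR `|_|; set e1 := expR (- a ^+ 2 / (2 * u1)).
set e2 := expR (- b ^+ 2 / (2 * u2)).
rewrite (_ : _ * _ * (c * E) = c * (expR (- a ^+ 2 / 2) * expR (- b ^+ 2 / 2) * E));
  last by ring.
rewrite (_ : y ^+ 2 * _ * _ = c * (e1 * e2)); last by rewrite /c; ring.
exact: ler_wpM2l.
Qed.

Lemma fine_of_balance {S Rm : \bar R} {a b C : R} :
  (0 <= S)%E -> (0 <= Rm)%E -> (Rm <= C%:E)%E -> (S + a%:E = b%:E + Rm)%E ->
  exists2 r : R, 0 <= r <= C & fine S = b - a + r.
Proof.
case: Rm => [r| |] //; rewrite !lee_fin => + r0 rC.
case: S => [s| |] //= _ [sE].
by exists r; [rewrite r0 rC | lra].
Qed.

Local Open Scope ereal_scope.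

Lemma dseriesD (f g : nat -> nat -> R) :
  (forall n m, (0 <= f n m)%R) -> (forall n m, (0 <= g n m)%R) ->
  \sum_(n <oo) \sum_(m <oo) (f n m + g n m)%:E =
  \sum_(n <oo) \sum_(m <oo) (f n m)%:E + \sum_(n <oo) \sum_(m <oo) (g n m)%:E.
Proof.
move=> f_ge0 g_ge0.
have row_ge0 (h : nat -> nat -> R) : (forall n m, (0 <= h n m)%R) ->
    forall n, 0 <= \sum_(m <oo) (h n m)%:E.
  by move=> h_ge0 n; apply: nneseries_ge0 => m _ _; rewrite lee_fin.
rewrite -nneseriesD => [|n _ _|n _ _]; last 2 first.
- exact: row_ge0.
- exact: row_ge0.
apply: eq_eseriesr => n _.
under eq_eseriesr do rewrite EFinD.
by rewrite nneseriesD => // m _ _; rewrite lee_fin.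
Qed.

Lemma dseries_sep (c : R) {x w : nat -> R} {X W : R} :
  \sum_(n <oo) (x n)%:E = X%:E -> \sum_(m <oo) (w m)%:E = W%:E ->
  (0 <= c)%R -> (forall n, (0 <= x n)%R) -> (forall m, (0 <= w m)%R) ->
  \sum_(n <oo) \sum_(m <oo) (c * x n * w m)%:E = (c * X * W)%:E.
Proof.
move=> sumx sumw c_ge0 x_ge0 w_ge0.
transitivity (\sum_(n <oo) (c * W)%:E * (x n)%:E).
  apply: eq_eseriesr => n _.
  under eq_eseriesr do rewrite EFinM.
  rewrite nneseriesZl => [|m _]; last by rewrite lee_fin.
  by rewrite sumw -!EFinM; congr (_%:E); ring.
rewrite nneseriesZl => [|n _]; last by rewrite lee_fin.
by rewrite sumx -EFinM; congr (_%:E); ring.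
Qed.

Lemma dseries_pos_mul (c : R) {x w : nat -> R} {Xp Xn Wp Wn : R} :
  \sum_(n <oo) (pos (x n))%:E = Xp%:E -> \sum_(n <oo) (neg (x n))%:E = Xn%:E ->
  \sum_(m <oo) (pos (w m))%:E = Wp%:E -> \sum_(m <oo) (neg (w m))%:E = Wn%:E ->
  \sum_(n <oo) \sum_(m <oo) (pos (c * x n * w m))%:E =
  (pos c * Xp * Wp + pos c * Xn * Wn + neg c * Xp * Wn + neg c * Xn * Wp)%:E.
Proof.
move=> xp xn wp wn.
under eq_eseriesr do under eq_eseriesr do rewrite pos_mul3.
rewrite !dseriesD; last 6 first.
all: try by move=> n m;
  do ![apply: pos_ge0 | apply: neg_ge0 | apply: addr_ge0 | apply: mulr_ge0].
have /= -> := dseries_sep (pos c) xp wp.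
have /= -> := dseries_sep (pos c) xn wn.
have /= -> := dseries_sep (neg c) xp wn.
have /= -> := dseries_sep (neg c) xn wp.
  by rewrite -!EFinD.
all: by move=> *; rewrite ?pos_ge0 ?neg_ge0.
Qed.

(* Real value of a series of reals: meaningful for a finite series of
   nonnegative terms. *)
Definition nnsum (f : nat -> R) : R := fine (\sum_(n <oo) (f n)%:E).

Lemma nnseries_le_finE (f g : nat -> R) : (forall n, 0 <= f n <= g n)%R ->
  \sum_(n <oo) (g n)%:E \is a fin_num ->
  \sum_(n <oo) (f n)%:E = (nnsum f)%:E /\ (nnsum f <= nnsum g)%R.
Proof.
move=> fg gfin.
have f_ge0 n : (0 <= f n)%R by have /andP[] := fg n.
have le_fg : \sum_(n <oo) (f n)%:E <= \sum_(n <oo) (g n)%:E.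
  by apply: lee_nneseries => [n _ _|n _]; rewrite lee_fin //; have /andP[] := fg n.
have sumf_ge0 : 0 <= \sum_(n <oo) (f n)%:E.
  by apply: nneseries_ge0 => n _ _; rewrite lee_fin.
have ffin : \sum_(n <oo) (f n)%:E \is a fin_num.
  rewrite ge0_fin_numE // (le_lt_trans le_fg) // -ge0_fin_numE //.
  exact: le_trans le_fg.
by split; [rewrite /nnsum fineK | exact: fine_le].
Qed.

Local Close Scope ereal_scope.

Section QuadraticExpansion.
Variables (S : R -> R) (B K C delta : R).
Hypotheses (delta_gt0 : 0 < delta) (C_ge0 : 0 <= C).
Hypothesis expansion : forall y, `|y| < delta ->
  exists2 r, 0 <= r <= y ^+ 2 * C & S y = B + y * K + r.

Lemma expansion_at0 : S 0 = B.
Proof.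
have := expansion 0; rewrite normr0 => /(_ delta_gt0)[r].
rewrite expr0n /= !mul0r addr0 => r_bnd ->.
suff -> : r = 0 by rewrite addr0.
by apply/eqP; rewrite eq_le andbC.
Qed.

(* The difference quotient differs from K by r(h)/h, which is O(h). *)
Lemma expansion_diff_quot :
  ((fun h => h^-1 * (S h - S 0)) @ 0^' --> K)%classic.
Proof.
apply/cvgrPdist_le => e e_gt0.
have C1_gt0 : 0 < C + 1 by rewrite ltr_wpDl.
have eC : 0 < e / (C + 1) by rewrite divr_gt0.
near=> h.
have h_neq0 : h != 0 by near: h; exact: nbhs_dnbhs_neq.
have h_delta : `|h| < delta by near: h; exact: dnbhs0_lt.
have h_small : `|h| < e / (C + 1) by near: h; exact: dnbhs0_lt.
have [r /andP[r_ge0 r_le] ->] := expansion h h_delta.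
rewrite expansion_at0 (_ : K - h^-1 * (B + h * K + r - B) = - (r / h)); last by field.
have h_gt0 : 0 < `|h| by rewrite normr_gt0.
rewrite normrN normrM normfV ger0_norm // ler_pdivrMr //.
apply: le_trans r_le _.
rewrite -(real_normK (num_real h)).
have : `|h| * (C + 1) < e by rewrite -ltr_pdivlMr //; lra.
nra.
Unshelve. all: by end_near.
Qed.

Lemma expansion_is_derive : is_derive (0 : R) (1 : R) S K.
Proof.
have quotE : (fun h : R => h^-1 *: ((S \o shift 0) (h *: 1) - S 0)) =
             (fun h => h^-1 * (S h - S 0)).
  by apply: funext => h /=; rewrite addr0 -[h%:A]/(h * 1) mulr1.
apply: DeriveDef; rewrite /derivable ?/derive quotE.
  by apply/cvg_ex; exists K; exact: expansion_diff_quot.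
exact/cvg_lim/expansion_diff_quot.
Qed.

Lemma expansion_derive_inv : 0 < B ->
  derive1 (fun y => (S y)^-1) 0 = - K / B ^+ 2.
Proof.
move=> B_gt0.
have S0_neq0 : S 0 != 0 by rewrite expansion_at0 gt_eqF.
have Sinv_derive := is_deriveV S0_neq0 expansion_is_derive.
rewrite derive1E derive_val expansion_at0 /GRing.scale /=.
by field; rewrite gt_eqF.
Qed.
End QuadraticExpansion.

End RealFacts.

(* An outer product v v^T is positive semidefinite: w (v v^T) w^T = (w.v)^2. *)
Lemma psd_outer {R : realType} {d : nat} (v : 'I_d -> R) :
  psd (\matrix_(i < d, j < d) (v i * v j)).
Proof.
split; first by apply/matrixP => i j; rewrite !mxE mulrC.
move=> w.
rewrite (_ : (w *m \matrix_(i < d, j < d) (v i * v j) *m w^T) 0 0 =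
             (\sum_(i < d) w 0 i * v i) ^+ 2); first exact: sqr_ge0.
rewrite expr2 mxE [RHS]big_distrr /=; apply: eq_bigr => j _.
rewrite !mxE !big_distrl /=; apply: eq_bigr => i _.
by rewrite !mxE; ring.
Qed.

Section GaussianSums.
Context {R : realType}.
Implicit Types (y u : R) (q : \bar R) (Q : nat -> \bar R).

Definition gw q : R := match q with EFin r => expR (- r ^+ 2 / 2) | _ => 0 end.
Definition gm q : R := gw q * fine q.

Lemma gw_ge0 q : 0 <= gw q.
Proof. by case: q => //= r; rewrite expR_ge0. Qed.

Lemma mterm_ge0 u k q : 0 <= mterm u k q.
Proof. by case: q => //= r; rewrite mulr_ge0 ?expR_ge0 ?exprn_ge0. Qed.

Lemma zterm_ge0 y q1 q2 : 0 <= zterm y q1 q2.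
Proof. by case: q1 => [a| |]; case: q2 => [b| |] //=; rewrite expR_ge0. Qed.

Lemma mterm_1_0 q : mterm 1 0 q = gw q.
Proof. by case: q => //= r; rewrite expr0 !mulr1. Qed.

Lemma mterm_1_1 q : mterm 1 1 q = `|gm q|.
Proof.
case: q => [r| |] /=; rewrite /gm ?mul0r ?normr0 //.
by rewrite mulr1 expr1 normrM ger0_norm ?expR_ge0.
Qed.

(* Pointwise expansion of a summand of S(y) with nonnegative terms only:
   e^t = 1 + t + rem(t) at t = y a b, with the signed term g(a) g(b) t
   split into its positive and negative parts. *)
Lemma zterm_split y q1 q2 :
  zterm y q1 q2 + neg (y * gm q1 * gm q2) =
  gw q1 * gw q2 + pos (y * gm q1 * gm q2)
  + gw q1 * gw q2 * exp_rem (y * fine q1 * fine q2).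
Proof.
rewrite -[pos _](subrK (neg (y * gm q1 * gm q2))) pos_subr_neg /exp_rem /gm.
case: q1 => [a| |]; case: q2 => [b| |] /=; rewrite ?(mul0r, mulr0).
all: try by rewrite ?(add0r, addr0, sub0r, subr0, oppr0).
rewrite (_ : expR _ = expR (- a ^+ 2 / 2) * expR (- b ^+ 2 / 2) * expR (y * a * b));
  first ring.
by rewrite -!expRD; congr expR; field.
Qed.

Lemma zterm_rem_ge0 y q1 q2 :
  0 <= gw q1 * gw q2 * exp_rem (y * fine q1 * fine q2).
Proof. by rewrite !mulr_ge0 ?gw_ge0 ?exp_rem_ge0. Qed.

Lemma zterm_rem_le y u1 u2 q1 q2 : 0 < u1 -> 0 < u2 ->
  `|y| <= 1 - u1^-1 -> `|y| <= 1 - u2^-1 ->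
  gw q1 * gw q2 * exp_rem (y * fine q1 * fine q2)
  <= y ^+ 2 * mterm u1 2 q1 * mterm u2 2 q2.
Proof.
move=> u1_gt0 u2_gt0 hy1 hy2.
case: q1 => [a| |]; case: q2 => [b| |] /=; rewrite ?(mul0r, mulr0);
  rewrite ?mulr_ge0 ?sqr_ge0 ?mterm_ge0 //.
exact: gauss_rem_le.
Qed.

Definition inv_sqrt2pi : R := (Num.sqrt (2 * pi))^-1.

Lemma inv_sqrt2pi_gt0 : 0 < inv_sqrt2pi.
Proof. by rewrite invr_gt0 sqrtr_gt0 mulr_gt0 // pi_gt0. Qed.

Lemma inv_sqrt2pi_sqr_le1 : inv_sqrt2pi ^+ 2 <= 1.
Proof.
rewrite exprVn sqr_sqrtr ?mulr_ge0 ?pi_ge0 // invf_le1 ?mulr_gt0 ?pi_gt0 //.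
by have := @pi_ge2 R; lra.
Qed.

Local Open Scope ereal_scope.

(* m^(k)(u) is the normalising constant times the value of its series
   (both sides vanish when the series diverges). *)
Lemma fine_mser Q k u :
  fine (mser Q k u) = (inv_sqrt2pi * nnsum (fun n => mterm u k (Q n)))%R.
Proof.
rewrite /mser -/inv_sqrt2pi /nnsum.
have : 0 <= \sum_(n <oo) (mterm u k (Q n))%:E.
  by apply: nneseries_ge0 => n _ _; rewrite lee_fin mterm_ge0.
case: (\sum_(n <oo) _) => [s| |] //= _.
by rewrite mulry gtr0_sg ?inv_sqrt2pi_gt0 // mul1e mulr0.
Qed.

Lemma mser_finE Q k u : mser Q k u \is a fin_num ->
  \sum_(n <oo) (mterm u k (Q n))%:E = (nnsum (fun n => mterm u k (Q n)))%:E.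
Proof.
rewrite /mser -/inv_sqrt2pi /nnsum.
have : 0 <= \sum_(n <oo) (mterm u k (Q n))%:E.
  by apply: nneseries_ge0 => n _ _; rewrite lee_fin mterm_ge0.
case: (\sum_(n <oo) _) => [s| |] //= _.
by rewrite mulry gtr0_sg ?inv_sqrt2pi_gt0 // mul1e.
Qed.

Lemma mser_fin_series Q k u : mser Q k u \is a fin_num ->
  \sum_(n <oo) (mterm u k (Q n))%:E \is a fin_num.
Proof. by move/mser_finE ->. Qed.

Definition gmass Q : R := nnsum (fun n => gw (Q n)).
Definition gmean_pos Q : R := nnsum (fun n => pos (gm (Q n))).
Definition gmean_neg Q : R := nnsum (fun n => neg (gm (Q n))).
Definition gmean Q : R := gmean_pos Q - gmean_neg Q.

Definition regular Q u : Prop :=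
  [/\ (1 < u)%R, mser Q 0 1 \is a fin_num, 0 < mser Q 0 1,
      mser Q 1 1 \is a fin_num & mser Q 2 u \is a fin_num].

Lemma regular_of_fin {Q} :
  (exists2 eps : R, (0 < eps)%R & forall (k : nat) (u : R), (k <= 2)%N ->
     (`|u - 1| < eps)%R -> mser Q k u \is a fin_num) ->
  0 < mser Q 0 1 -> exists u, regular Q u.
Proof.
case=> eps eps_gt0 fin pos01; exists (1 + eps / 2)%R.
have near1 : (`|1 - 1| < eps)%R by rewrite subrr normr0.
split=> //; [lra | exact: fin | exact: fin |].
by apply: fin => //; rewrite addrC addKr ger0_norm; lra.
Qed.

Lemma regular_series {Q u} : regular Q u ->
  [/\ \sum_(n <oo) (gw (Q n))%:E = (gmass Q)%:E,
      \sum_(n <oo) (pos (gm (Q n)))%:E = (gmean_pos Q)%:E,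
      \sum_(n <oo) (neg (gm (Q n)))%:E = (gmean_neg Q)%:E &
      \sum_(n <oo) (mterm u 2 (Q n))%:E = (nnsum (fun n => mterm u 2 (Q n)))%:E].
Proof.
case=> _ /mser_fin_series m0 _ /mser_fin_series m1 m2; split.
- by have [] := nnseries_le_finE (fun n => gw (Q n)) _ _ m0 => // n;
    rewrite mterm_1_0 lexx gw_ge0.
- by have [] := nnseries_le_finE (fun n => pos (gm (Q n))) _ _ m1 => // n;
    rewrite mterm_1_1 pos_ge0 pos_le_norm.
- by have [] := nnseries_le_finE (fun n => neg (gm (Q n))) _ _ m1 => // n;
    rewrite mterm_1_1 neg_ge0 neg_le_norm.
- exact: mser_finE.
Qed.

Lemma fine_mser_mass Q : fine (mser Q 0 1) = (inv_sqrt2pi * gmass Q)%R.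
Proof.
by rewrite fine_mser /gmass; congr (_ * nnsum _)%R; apply/funext => n; rewrite mterm_1_0.
Qed.

Lemma gmass_gt0 {Q u} : regular Q u -> (0 < gmass Q)%R.
Proof.
case=> _ m0 m0_gt0 _ _.
have : (0 < fine (mser Q 0 1))%R by rewrite -lte_fin fineK.
by rewrite fine_mser_mass pmulr_rgt0 // inv_sqrt2pi_gt0.
Qed.

Lemma gmean_abs_le {Q u} : regular Q u ->
  (`|gmean Q| <= nnsum (fun n => mterm 1 1 (Q n)))%R.
Proof.
case=> _ _ _ /mser_fin_series m1 _.
have bnd_pos n : (0 <= pos (gm (Q n)) <= mterm 1 1 (Q n))%R.
  by rewrite mterm_1_1 pos_ge0 pos_le_norm.
have bnd_neg n : (0 <= neg (gm (Q n)) <= mterm 1 1 (Q n))%R.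
  by rewrite mterm_1_1 neg_ge0 neg_le_norm.
have [_ Pp] := nnseries_le_finE _ _ bnd_pos m1.
have [_ Pn] := nnseries_le_finE _ _ bnd_neg m1.
have P0 : (0 <= gmean_pos Q)%R.
  by apply: fine_ge0; apply: nneseries_ge0 => n _ _; rewrite lee_fin pos_ge0.
have N0 : (0 <= gmean_neg Q)%R.
  by apply: fine_ge0; apply: nneseries_ge0 => n _ _; rewrite lee_fin neg_ge0.
move: Pp Pn; rewrite -/(gmean_pos Q) -/(gmean_neg Q) /gmean ler_norml => Pp Pn.
by apply/andP; split; lra.
Qed.

Lemma zsum_balance Q1 Q2 y :
  \sum_(n <oo) \sum_(m <oo) (zterm y (Q1 n) (Q2 m))%:E +
  \sum_(n <oo) \sum_(m <oo) (neg (y * gm (Q1 n) * gm (Q2 m)))%:E =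
  \sum_(n <oo) \sum_(m <oo) (1 * gw (Q1 n) * gw (Q2 m))%:E +
  \sum_(n <oo) \sum_(m <oo) (pos (y * gm (Q1 n) * gm (Q2 m)))%:E +
  \sum_(n <oo) \sum_(m <oo)
     (gw (Q1 n) * gw (Q2 m) * exp_rem (y * fine (Q1 n) * fine (Q2 m)))%:E.
Proof.
rewrite -!dseriesD; last 6 first.
all: try by move=> n m; do ![apply: pos_ge0 | apply: neg_ge0 | apply: gw_ge0
  | apply: zterm_ge0 | apply: exp_rem_ge0 | apply: ler01 | apply: addr_ge0
  | apply: mulr_ge0].
by apply: eq_eseriesr => n _; apply: eq_eseriesr => m _; rewrite mul1r zterm_split.
Qed.

Lemma zsum_rem_le {Q1 Q2 u1 u2 y} : regular Q1 u1 -> regular Q2 u2 ->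
  (`|y| <= 1 - u1^-1)%R -> (`|y| <= 1 - u2^-1)%R ->
  \sum_(n <oo) \sum_(m <oo)
     (gw (Q1 n) * gw (Q2 m) * exp_rem (y * fine (Q1 n) * fine (Q2 m)))%:E
  <= (y ^+ 2 * (nnsum (fun n => mterm u1 2 (Q1 n)) *
                nnsum (fun m => mterm u2 2 (Q2 m))))%:E.
Proof.
move=> reg1 reg2 hy1 hy2.
have [_ _ _ M1] := regular_series reg1; have [_ _ _ M2] := regular_series reg2.
have u1_gt0 : (0 < u1)%R by case: reg1 => /(lt_trans ltr01).
have u2_gt0 : (0 < u2)%R by case: reg2 => /(lt_trans ltr01).
rewrite mulrA -(dseries_sep (y ^+ 2) M1 M2); last 3 first.
- exact: sqr_ge0.
- by move=> n; exact: mterm_ge0.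
- by move=> m; exact: mterm_ge0.
apply: lee_nneseries => [n _ _|n _].
  by apply: nneseries_ge0 => m _ _; rewrite lee_fin zterm_rem_ge0.
apply: lee_nneseries => [m _ _|m _]; rewrite lee_fin ?zterm_rem_ge0 //.
exact: zterm_rem_le.
Qed.

(* The quadratic expansion S(y) = B1 B2 + y A1 A2 + r(y) with
   0 <= r(y) <= y^2 m1^(2)(u1) m2^(2)(u2) (up to normalisation), valid for
   |y| <= 1 - 1/u_k: every double series in zsum_balance but S(y) is
   computed or bounded. *)
Lemma zsum_expansion {Q1 Q2 u1 u2 y} : regular Q1 u1 -> regular Q2 u2 ->
  (`|y| <= 1 - u1^-1)%R -> (`|y| <= 1 - u2^-1)%R ->
  exists2 r : R,
    (0 <= r <= y ^+ 2 * (nnsum (fun n => mterm u1 2 (Q1 n)) *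
                         nnsum (fun m => mterm u2 2 (Q2 m))))%R &
    fine (\sum_(n <oo) \sum_(m <oo) (zterm y (Q1 n) (Q2 m))%:E) =
      (gmass Q1 * gmass Q2 + y * (gmean Q1 * gmean Q2) + r)%R.
Proof.
move=> reg1 reg2 hy1 hy2.
have [B1 P1 N1 _] := regular_series reg1.
have [B2 P2 N2 _] := regular_series reg2.
have negE : \sum_(n <oo) \sum_(m <oo) (neg (y * gm (Q1 n) * gm (Q2 m)))%:E =
    (pos (- y) * gmean_pos Q1 * gmean_pos Q2 + pos (- y) * gmean_neg Q1 * gmean_neg Q2
     + neg (- y) * gmean_pos Q1 * gmean_neg Q2
     + neg (- y) * gmean_neg Q1 * gmean_pos Q2)%:E.
  rewrite -(dseries_pos_mul (- y) P1 N1 P2 N2).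
  by apply: eq_eseriesr => n _; apply: eq_eseriesr => m _; rewrite /neg -!mulNr.
have massE := dseries_sep 1 B1 B2 ler01 (fun n => gw_ge0 (Q1 n)) (fun m => gw_ge0 (Q2 m)).
have balance := zsum_balance Q1 Q2 y.
rewrite (dseries_pos_mul y P1 N1 P2 N2) negE massE -EFinD in balance.
have S_ge0 : 0 <= \sum_(n <oo) \sum_(m <oo) (zterm y (Q1 n) (Q2 m))%:E.
  by apply: nneseries_ge0 => n _ _; apply: nneseries_ge0 => m _ _;
    rewrite lee_fin zterm_ge0.
have Rm_ge0 : 0 <= \sum_(n <oo) \sum_(m <oo)
    (gw (Q1 n) * gw (Q2 m) * exp_rem (y * fine (Q1 n) * fine (Q2 m)))%:E.
  by apply: nneseries_ge0 => n _ _; apply: nneseries_ge0 => m _ _;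
    rewrite lee_fin zterm_rem_ge0.
have [r r_bnd ->] :=
  fine_of_balance S_ge0 Rm_ge0 (zsum_rem_le reg1 reg2 hy1 hy2) balance.
exists r => //.
rewrite -/(neg y) (_ : neg (- y) = pos y); last by rewrite /neg opprK.
by rewrite /gmean -[y in RHS]pos_subr_neg; ring.
Qed.

Local Close Scope ereal_scope.

Lemma zfun_derive0 {Q1 Q2 u1 u2} : regular Q1 u1 -> regular Q2 u2 ->
  derive1 (zfun Q1 Q2) 0 = - (gmean Q1 * gmean Q2) / (gmass Q1 * gmass Q2) ^+ 2.
Proof.
move=> reg1 reg2.
have gap_gt0 Q u : regular Q u -> 0 < 1 - u^-1.
  by case=> u_gt1 *; rewrite subr_gt0 invf_lt1 // (lt_trans ltr01).
have M_ge0 Q u : 0 <= nnsum (fun n => mterm u 2 (Q n)).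
  by apply: fine_ge0; apply: nneseries_ge0 => n _ _; rewrite lee_fin mterm_ge0.
apply: (expansion_derive_inv _ _ _
  (nnsum (fun n => mterm u1 2 (Q1 n)) * nnsum (fun m => mterm u2 2 (Q2 m)))
  (Num.min (1 - u1^-1) (1 - u2^-1))).
- by rewrite lt_min (gap_gt0 _ _ reg1) (gap_gt0 _ _ reg2).
- exact: mulr_ge0 (M_ge0 _ _) (M_ge0 _ _).
- move=> y; rewrite lt_min => /andP[/ltW hy1 /ltW hy2].
  have [r r_bnd S_eq] := zsum_expansion reg1 reg2 hy1 hy2.
  by exists r.
- exact: mulr_gt0 (gmass_gt0 reg1) (gmass_gt0 reg2).
Qed.

Lemma gmean_ratio_sqr_le {Q u} : regular Q u ->
  (gmean Q / gmass Q ^+ 2) ^+ 2 <= fine (mser Q 1 1) ^+ 2 / fine (mser Q 0 1) ^+ 4.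
Proof.
move=> reg; rewrite fine_mser_mass fine_mser.
have mean_le := gmean_abs_le reg; have mass_gt0 := gmass_gt0 reg.
have c_gt0 := inv_sqrt2pi_gt0; have c2_le1 := inv_sqrt2pi_sqr_le1.
set A := gmean Q in mean_le *; set M := nnsum _ in mean_le *.
set B := gmass Q in mass_gt0 *; set c := inv_sqrt2pi in c_gt0 c2_le1 *.
rewrite (_ : (c * M) ^+ 2 / (c * B) ^+ 4 = M ^+ 2 / c ^+ 2 / B ^+ 4); last first.
  by field; rewrite !gt_eqF.
rewrite expr_div_n -exprM; apply: ler_wpM2r; first by rewrite invr_ge0 exprn_ge0 ?ltW.
have A2_le : A ^+ 2 <= M ^+ 2.
  by rewrite -(real_normK (num_real A)); have := normr_ge0 A; nra.
apply: le_trans A2_le _.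
by rewrite ler_pdivlMr ?exprn_gt0 // ler_piMr ?sqr_ge0.
Qed.

End GaussianSums.

Theorem mainTheorem10 (R : realType) (d : nat)
  (dT : measure_display) (T : measurableType dT) (P : probability T R)
  (X : 'I_d -> T -> nat)
  (hX : forall i, measurable_fun setT (X i))
  (hfin : forall i : 'I_d, exists2 eps : R, 0 < eps &
     forall (k : nat) (u : R), (k <= 2)%N -> `|u - 1| < eps ->
       mser (Qseq P X i) k u \is a fin_num)
  (hpos : forall i : 'I_d, (0 < mser (Qseq P X i) 0 1)%E) :
  let z i j := zfun (Qseq P X i) (Qseq P X j) in
  psd (\matrix_(i < d, j < d) - derive1 (z i j) 0) /\
  forall i : 'I_d,
    `|derive1 (z i i) 0| <=
      (fine (mser (Qseq P X i) 1 1)) ^+ 2 / (fine (mser (Qseq P X i) 0 1)) ^+ 4.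
Proof.
move=> z.
have regular_i i : exists u, regular (Qseq P X i) u := regular_of_fin (hfin i) (hpos i).
pose v i := gmean (Qseq P X i) / gmass (Qseq P X i) ^+ 2.
have z'E i j : derive1 (z i j) 0 = - (v i * v j).
  have [ui regi] := regular_i i; have [uj regj] := regular_i j.
  have := gmass_gt0 regi; have := gmass_gt0 regj.
  by rewrite /z (zfun_derive0 regi regj) /v => mj mi; field; rewrite !gt_eqF.
split.
  rewrite (_ : \matrix_(i < d, j < d) _ = \matrix_(i < d, j < d) (v i * v j)).
    exact: psd_outer.
  by apply/matrixP => i j; rewrite !mxE z'E opprK.
move=> i; have [u reg] := regular_i i.
by rewrite z'E normrN -expr2 ger0_norm ?sqr_ge0 // (gmean_ratio_sqr_le reg).
Qed.
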